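(* Let $\delta:\,]0,+\infty[\to\mathbb R$ be nonnegative, bounded and continuously differentiable, and let $r:\,]\alpha,\omega[\to\,]0,+\infty[$ be a solution of $\ddot r+\delta(r)\dot r=-1/r^2$ which is maximal both to the left and to the right, with energy $h(t)=\frac12\dot r(t)^2-\frac1{r(t)}$. If $\omega<+\infty$ and $h(\omega):=\lim_{t\uparrow\omega}h(t)>-\infty$, then $\lim_{t\uparrow\omega}\dfrac{r(t)}{(\omega-t)^{2/3}}=\sqrt[3]{9/2}$.
   Context: The energy $h$ is nonincreasing along solutions, so the limit $h(\omega)$ exists in $[-\infty,+\infty[$. *)

From Stdlib Require Import Reals.
From Coquelicot Require Import Coquelicot.
Open Scope R_scope.

Definition admissible_delta (delta : R -> R) : Prop :=
  (forall x, 0 < x -> 0 <= delta x) /\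
  (exists M, forall x, 0 < x -> Rabs (delta x) <= M) /\
  (forall x, 0 < x -> ex_derive delta x /\ continuous (Derive delta) x).

Definition is_solution (delta : R -> R) (a b : Rbar) (r : R -> R) : Prop :=
  forall t, Rbar_lt a t -> Rbar_lt t b ->
    0 < r t /\ ex_derive r t /\ ex_derive (Derive r) t /\
    Derive (Derive r) t + delta (r t) * Derive r t = - / (r t ^ 2).

Definition maximal_right (delta : R -> R) (a b : Rbar) (r : R -> R) : Prop :=
  forall b' : Rbar, Rbar_lt b b' ->
    ~ (exists s, is_solution delta a b' s /\
         forall t, Rbar_lt a t -> Rbar_lt t b -> s t = r t).

Definition maximal_left (delta : R -> R) (a b : Rbar) (r : R -> R) : Prop :=
  forall a' : Rbar, Rbar_lt a' a ->
    ~ (exists s, is_solution delta a' b s /\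
         forall t, Rbar_lt a t -> Rbar_lt t b -> s t = r t).

Definition energy (r : R -> R) (t : R) : R :=
  / 2 * (Derive r t) ^ 2 - / r t.

(* The energy [h = r'^2/2 - 1/r] is nonincreasing with a finite limit [h(omega)], so
   [r'^2 = 2 h + 2/r] stays bounded as long as [r] stays away from [0].  If [r] did not tend
   to [0] at [omega], it would be bounded below (at a local minimum of height below
   [1/(|h(omega)| + 1)] we would have [r'^2 >= 2]), hence bounded above too; written as a
   first-order system in the Liénard variables [(r, r' + D(r))] with [D' = delta], the equation
   could then be solved by Picard iteration from a point close to [omega], continuing [r]
   beyond [omega] against maximality.  So [r -> 0]; then [r r'^2 = 2 h r + 2 -> 2] with
   [r' < 0], i.e. [(r^(3/2))' -> -(3/2) sqrt 2], and l'Hospital's rule gives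
   [r^(3/2) / (omega - t) -> (3/2) sqrt 2], that is
   [r / (omega - t)^(2/3) -> ((3/2) sqrt 2)^(2/3) = (9/2)^(1/3)]. *)

From Stdlib Require Import Reals Lra Lia Classical.
From Coquelicot Require Import Coquelicot.
Open Scope R_scope.

Lemma continuous_eps (f : R -> R) x :
  continuous f x <->
  (forall eps, 0 < eps -> exists d, 0 < d /\
     forall y, Rabs (y - x) < d -> Rabs (f y - f x) < eps).
Proof.
  split.
  - intros Hf eps Heps.
    destruct (proj1 (filterlim_locally f (f x)) Hf (mkposreal eps Heps)) as [d Hd].
    exists d; split; [apply cond_pos|]. intros y Hy. exact (Hd y Hy).
  - intros H. apply filterlim_locally. intros eps.
    destruct (H eps (cond_pos eps)) as [d [Hd H']].
    exists (mkposreal d Hd). intros y Hy. exact (H' y Hy).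
Qed.

Lemma filterlim_at_left_eps (f : R -> R) w l :
  filterlim f (at_left w) (locally l) <->
  (forall eps, 0 < eps -> exists d, 0 < d /\
     forall t, w - d < t < w -> Rabs (f t - l) < eps).
Proof.
  split.
  - intros Hf eps Heps.
    destruct (proj1 (filterlim_locally f l) Hf (mkposreal eps Heps)) as [d Hd].
    exists d; split; [apply cond_pos|]. intros t Ht. apply (Hd t); [|lra].
    change (Rabs (t - w) < d). rewrite Rabs_left; lra.
  - intros H. apply filterlim_locally. intros eps.
    destruct (H eps (cond_pos eps)) as [d [Hd H']].
    exists (mkposreal d Hd). intros y Hy Hyw. apply H'.
    change (Rabs (y - w) < d) in Hy. rewrite Rabs_left in Hy; lra.
Qed.

Lemma locally_interval (a b t : R) : a < t < b -> locally t (fun s => a < s < b).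
Proof.
  intros Ht. assert (Hd : 0 < Rmin (t - a) (b - t)) by (apply Rmin_pos; lra).
  exists (mkposreal _ Hd). intros s Hs. change (Rabs (s - t) < Rmin (t - a) (b - t)) in Hs.
  pose proof (Rmin_l (t - a) (b - t)); pose proof (Rmin_r (t - a) (b - t)).
  revert Hs; unfold Rabs; destruct Rcase_abs; intros; lra.
Qed.

Lemma at_left_interval (T w : R) (P : R -> Prop) : T < w ->
  (forall t, T < t < w -> P t) -> at_left w P.
Proof.
  intros HT HP. assert (Hd : 0 < w - T) by lra.
  exists (mkposreal _ Hd). intros t Ht Htw. apply HP.
  change (Rabs (t - w) < w - T) in Ht. rewrite Rabs_left in Ht; lra.
Qed.

Lemma continuous_at_left_bounds (f : R -> R) w T a b : T < w -> continuous f w ->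
  (forall t, T < t < w -> a <= f t <= b) -> a <= f w <= b.
Proof.
  intros HT Hf Hab.
  assert (Near : forall eps, 0 < eps -> exists t, T < t < w /\ Rabs (f t - f w) < eps).
  { intros eps Heps. destruct (proj1 (continuous_eps f w) Hf eps Heps) as [d [Hd H]].
    set (t := Rmax ((T + w) / 2) (w - d / 2)).
    assert ((T + w) / 2 <= t) by apply Rmax_l. assert (w - d / 2 <= t) by apply Rmax_r.
    assert (t < w) by (unfold t, Rmax; destruct Rle_dec; lra).
    exists t. split; [split; lra|]. apply H. rewrite Rabs_left; lra. }
  split; apply Rnot_lt_le; intros Hlt.
  - destruct (Near (a - f w)) as [t [Ht Hft]]; [lra|].
    specialize (Hab t Ht). revert Hft; unfold Rabs; destruct Rcase_abs; intros; lra.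
  - destruct (Near (f w - b)) as [t [Ht Hft]]; [lra|].
    specialize (Hab t Ht). revert Hft; unfold Rabs; destruct Rcase_abs; intros; lra.
Qed.

Lemma Rbar_lt_R_le (a : Rbar) (x y : R) : Rbar_lt a x -> x <= y -> Rbar_lt a y.
Proof. intros H Hxy. exact (Rbar_lt_le_trans a x y H Hxy). Qed.

Lemma Rbar_lt_exists_between (a : Rbar) (w : R) : Rbar_lt a w -> exists T : R, Rbar_lt a T /\ T < w.
Proof.
  destruct a as [a| |]; simpl; intros H.
  - exists ((a + w) / 2). simpl. split; lra.
  - contradiction.
  - exists (w - 1). split; [exact I|lra].
Qed.

Lemma Rabs_sub_triang a b c : Rabs (a - c) <= Rabs (a - b) + Rabs (b - c).
Proof. replace (a - c) with ((a - b) + (b - c)) by ring. apply Rabs_triang. Qed.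

Lemma Rabs_between a t s : Rmin a t <= s <= Rmax a t -> Rabs (s - a) <= Rabs (t - a).
Proof.
  intros Hs. unfold Rmin, Rmax in Hs.
  destruct (Rle_dec a t); unfold Rabs; repeat destruct Rcase_abs; lra.
Qed.

Lemma exists_div_pow2_lt C eps : 0 < eps -> exists n, C / 2 ^ n < eps.
Proof.
  intros Heps. destruct (cv_pow_half C eps Heps) as [n Hn].
  exists n. specialize (Hn n (le_n n)). unfold R_dist in Hn. rewrite Rminus_0_r in Hn.
  exact (Rle_lt_trans _ _ _ (Rle_abs _) Hn).
Qed.

Lemma le_div_pow2_le0 x C : (forall n, x <= C / 2 ^ n) -> x <= 0.
Proof.
  intros H. apply Rnot_lt_le. intros Hx.
  destruct (exists_div_pow2_lt C x Hx) as [n Hn]. specialize (H n). lra.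
Qed.

Lemma is_lim_seq_pow2_cauchy (u : nat -> R) C :
  (forall n p, Rabs (u (n + p)%nat - u n) <= C / 2 ^ n) -> is_lim_seq u (real (Lim_seq u)).
Proof.
  intros H. apply Lim_seq_correct', ex_lim_seq_cauchy_corr.
  intros eps. destruct (exists_div_pow2_lt (2 * C) eps (cond_pos eps)) as [N HN].
  exists N. intros n m Hn Hm.
  pose proof (H N (n - N)%nat) as Hn'. pose proof (H N (m - N)%nat) as Hm'.
  replace (N + (n - N))%nat with n in Hn' by lia.
  replace (N + (m - N))%nat with m in Hm' by lia.
  pose proof (Rabs_sub_triang (u n) (u N) (u m)) as T.
  rewrite (Rabs_minus_sym (u N) (u m)) in T. unfold Rdiv in *. lra.
Qed.

Lemma continuous_pow2_uniform_limit (f : nat -> R -> R) (g : R -> R) t rho C :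
  0 < rho -> (forall n, continuous (f n) t) ->
  (forall n s, Rabs (s - t) < rho -> Rabs (g s - f n s) <= C / 2 ^ n) ->
  continuous g t.
Proof.
  intros Hrho Hf Hfg. apply continuous_eps. intros eps Heps.
  destruct (exists_div_pow2_lt C (eps / 3)) as [n Hn]; [lra|].
  destruct (proj1 (continuous_eps (f n) t) (Hf n) (eps / 3)) as [d [Hd Hfn]]; [lra|].
  exists (Rmin d rho). split; [apply Rmin_pos; lra|]. intros y Hy.
  pose proof (Rmin_l d rho). pose proof (Rmin_r d rho).
  assert (Ht : Rabs (t - t) < rho) by (rewrite Rminus_diag, Rabs_R0; lra).
  pose proof (Hfg n y ltac:(lra)) as Ey. pose proof (Hfg n t Ht) as Et.
  specialize (Hfn y ltac:(lra)).
  pose proof (Rabs_sub_triang (g y) (f n y) (g t)) as T1.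
  pose proof (Rabs_sub_triang (f n y) (f n t) (g t)) as T2.
  rewrite (Rabs_minus_sym (f n t)) in T2. lra.
Qed.

Lemma MVT_le (f df : R -> R) a b : a <= b ->
  (forall x, a <= x <= b -> is_derive f x (df x)) ->
  exists c, a <= c <= b /\ f b - f a = df c * (b - a).
Proof.
  intros Hab Hd. destruct (MVT_gen f a b df) as [c [Hc E]].
  - intros x Hx. rewrite Rmin_left, Rmax_right in Hx by lra. apply Hd; lra.
  - intros x Hx. rewrite Rmin_left, Rmax_right in Hx by lra.
    apply derivable_continuous_pt. exists (df x). apply is_derive_Reals, Hd; lra.
  - rewrite Rmin_left, Rmax_right in Hc by lra. eauto.
Qed.

Lemma is_derive_pos_right (f : R -> R) t l : is_derive f t l -> 0 < l ->
  exists e, 0 < e /\ forall x, t < x < t + e -> f t < f x.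
Proof.
  intros Hd Hl. destruct (proj1 (is_derive_Reals f t l) Hd (l / 2)) as [e He]; [lra|].
  exists e. split; [apply cond_pos|]. intros x Hx.
  specialize (He (x - t) ltac:(lra) ltac:(rewrite Rabs_right; lra)).
  replace (t + (x - t)) with x in He by ring.
  assert (Hq : 0 < (f x - f t) / (x - t)) by (revert He; unfold Rabs; destruct Rcase_abs; intros; lra).
  apply Rmult_lt_compat_r with (r := x - t) in Hq; [|lra].
  unfold Rdiv in Hq. rewrite Rmult_0_l, Rmult_assoc, Rinv_l, Rmult_1_r in Hq by lra. lra.
Qed.

Lemma interior_min_critical (f : R -> R) a b c : a < c < b ->
  (forall x, a <= x <= b -> ex_derive f x) -> f c < f a -> f c < f b ->
  exists xi, a < xi < b /\ f xi <= f c /\ Derive f xi = 0.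
Proof.
  intros Hc Hd Ha Hb.
  destruct (continuity_ab_min f a b) as [xi [Hmin Hxi]]; [lra| |].
  { intros x Hx. apply continuity_pt_filterlim, (ex_derive_continuous (V := R_NormedModule)), Hd, Hx. }
  pose proof (Hmin c ltac:(lra)).
  assert (xi <> a) by (intros ->; lra). assert (xi <> b) by (intros ->; lra).
  exists xi. split; [lra|]. split; [lra|].
  assert (Hpr : derivable_pt_lim f xi (Derive f xi))
    by (apply is_derive_Reals, Derive_correct, Hd; lra).
  rewrite <- (derive_pt_eq_0 f xi _ (exist _ _ Hpr) Hpr).
  apply (deriv_minimum f a b); try lra. intros x Hax Hxb. apply Hmin; lra.
Qed.

Lemma interior_max_critical (f : R -> R) a b c : a < c < b ->
  (forall x, a <= x <= b -> ex_derive f x) -> f a < f c -> f b < f c ->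
  exists xi, a < xi < b /\ f c <= f xi /\ Derive f xi = 0.
Proof.
  intros Hc Hd Ha Hb.
  destruct (interior_min_critical (fun x => - f x) a b c) as [xi [Hxi [Hv D]]]; try lra.
  - intros x Hx. apply (ex_derive_opp (V := R_NormedModule)), Hd, Hx.
  - exists xi. rewrite Derive_opp in D. split; [|split]; lra.
Qed.

Lemma tail_bound_of_derivative (f df : R -> R) w t k e : t < w ->
  (forall s, t <= s < w -> is_derive f s (df s) /\ Rabs (df s + k) <= e) ->
  filterlim f (at_left w) (locally 0) ->
  Rabs (f t - k * (w - t)) <= e * (w - t).
Proof.
  intros Ht Hd Hf.
  assert (Key : forall s, t < s < w ->
    Rabs (f t - k * (w - t)) <= Rabs (f s) + e * (w - t) + Rabs k * (w - s)).
  { intros s Hs. destruct (MVT_le f df t s) as [xi [Hxi E]]; [lra|intros; apply Hd; lra|].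
    destruct (Hd xi ltac:(lra)) as [_ Hxi'].
    replace (f t - k * (w - t)) with (f s - (df xi + k) * (s - t) - k * (w - s)) by lra.
    pose proof (Rabs_triang (f s - (df xi + k) * (s - t)) (- (k * (w - s)))).
    pose proof (Rabs_triang (f s) (- ((df xi + k) * (s - t)))).
    rewrite !Rabs_Ropp, !Rabs_mult, (Rabs_right (s - t)), (Rabs_right (w - s)) in * by lra.
    pose proof (Rabs_pos (df xi + k)).
    assert (Rabs (df xi + k) * (s - t) <= e * (w - t)) by nra.
    unfold Rminus in *. lra. }
  apply le_epsilon. intros eta Heta.
  destruct (proj1 (filterlim_at_left_eps _ _ _) Hf (eta / 2)) as [d [Hd0 Hfd]]; [lra|].
  set (d' := Rmin d (eta / (2 * (Rabs k + 1)))).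
  assert (Hd' : 0 < d' /\ d' <= d /\ d' <= eta / (2 * (Rabs k + 1))).
  { pose proof (Rabs_pos k). unfold d'.
    split; [apply Rmin_pos; [lra|apply Rdiv_lt_0_compat; lra]|].
    split; [apply Rmin_l|apply Rmin_r]. }
  set (s := Rmax ((t + w) / 2) (w - d' / 2)).
  assert (Hs : t < s < w /\ w - d' / 2 <= s) by (unfold s, Rmax; destruct Rle_dec; lra).
  pose proof (Key s ltac:(lra)). specialize (Hfd s ltac:(lra)). rewrite Rminus_0_r in Hfd.
  assert (Rabs k * (w - s) <= eta / 2).
  { pose proof (Rabs_pos k).
    apply Rle_trans with (Rabs k * (eta / (2 * (Rabs k + 1)))); [apply Rmult_le_compat_l; lra|].
    apply Rmult_le_reg_r with (2 * (Rabs k + 1)); [lra|]. field_simplify; [nra|lra]. }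
  lra.
Qed.

Lemma ratio_limit_of_derivative (f df : R -> R) w T k : T < w ->
  (forall t, T < t < w -> is_derive f t (df t)) ->
  filterlim f (at_left w) (locally 0) -> filterlim df (at_left w) (locally (- k)) ->
  filterlim (fun t => f t / (w - t)) (at_left w) (locally k).
Proof.
  intros HT Hd Hf Hdf. apply filterlim_at_left_eps. intros eps Heps.
  destruct (proj1 (filterlim_at_left_eps _ _ _) Hdf (eps / 2)) as [d [Hd0 Hdd]]; [lra|].
  exists (Rmin d (w - T)). split; [apply Rmin_pos; lra|]. intros t Ht.
  pose proof (Rmin_l d (w - T)); pose proof (Rmin_r d (w - T)).
  assert (Bound : Rabs (f t - k * (w - t)) <= eps / 2 * (w - t)).
  { apply (tail_bound_of_derivative f df); [lra| |exact Hf].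
    intros s Hs. split; [apply Hd; lra|].
    specialize (Hdd s ltac:(lra)). replace (df s + k) with (df s - - k) by ring. lra. }
  replace (f t / (w - t) - k) with ((f t - k * (w - t)) / (w - t)) by (field; lra).
  unfold Rdiv. rewrite Rabs_mult, (Rabs_right (/ (w - t)))
    by (apply Rle_ge, Rlt_le, Rinv_0_lt_compat; lra).
  apply Rle_lt_trans with (eps / 2 * (w - t) * / (w - t)).
  - apply Rmult_le_compat_r; [apply Rlt_le, Rinv_0_lt_compat; lra|exact Bound].
  - replace (eps / 2 * (w - t) * / (w - t)) with (eps / 2) by (field; lra). lra.
Qed.

Lemma abs_RInt_le_const_abs f a b B : ex_RInt f a b ->
  (forall s, Rmin a b <= s <= Rmax a b -> Rabs (f s) <= B) ->
  Rabs (RInt f a b) <= Rabs (b - a) * B.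
Proof.
  intros Hf HB. destruct (Rle_dec a b) as [Hab|Hab].
  - rewrite (Rabs_right (b - a)) by lra. apply abs_RInt_le_const; auto.
    intros t Ht. apply HB. rewrite Rmin_left, Rmax_right; lra.
  - rewrite <- (opp_RInt_swap f b a) by (apply ex_RInt_swap; auto).
    change (Rabs (- RInt f b a) <= Rabs (b - a) * B).
    rewrite Rabs_Ropp, (Rabs_left (b - a)) by lra. replace (- (b - a)) with (a - b) by ring.
    apply abs_RInt_le_const; [lra|apply ex_RInt_swap; auto|].
    intros t Ht. apply HB. rewrite Rmin_right, Rmax_left; lra.
Qed.

Lemma RInt_is_derive (f g : R -> R) a b :
  (forall s, Rmin a b <= s <= Rmax a b -> is_derive f s (g s) /\ continuous g s) ->
  RInt g a b = f b - f a.
Proof.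
  intros H. apply is_RInt_unique, (is_RInt_derive f g); intros x Hx; apply H; auto.
Qed.

Lemma is_derive_RInt_ball (g : R -> R) a h t :
  (forall s, Rabs (s - a) < h -> continuous g s) -> Rabs (t - a) < h ->
  is_derive (RInt g a) t (g t).
Proof.
  intros Hg Ht. apply (is_derive_RInt g (RInt g a) a t); [|apply Hg; exact Ht].
  assert (Hp : 0 < h - Rabs (t - a)) by lra.
  exists (mkposreal _ Hp). intros y Hy. change (Rabs (y - t) < h - Rabs (t - a)) in Hy.
  apply (RInt_correct (V := R_CompleteNormedModule)). apply ex_RInt_continuous.
  intros z Hz. apply Hg. pose proof (Rabs_sub_triang y t a).
  unfold Rmin, Rmax in Hz. destruct (Rle_dec a y); revert Hy; unfold Rabs;
    repeat destruct Rcase_abs; intros; lra.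
Qed.

Lemma is_derive_const_plus_RInt (g : R -> R) c a h t :
  (forall s, Rabs (s - a) < h -> continuous g s) -> Rabs (t - a) < h ->
  is_derive (fun t => c + RInt g a t) t (g t).
Proof.
  intros Hg Ht. replace (g t) with (0 + g t) by ring.
  apply (is_derive_plus (fun _ => c) (RInt g a)).
  - apply (is_derive_const (K := R_AbsRing) (V := R_NormedModule)).
  - exact (is_derive_RInt_ball g a h t Hg Ht).
Qed.

Lemma is_derive_mul_sqrt (f : R -> R) t : 0 < f t -> ex_derive f t ->
  is_derive (fun t => f t * sqrt (f t)) t (3 / 2 * sqrt (f t) * Derive f t).
Proof.
  intros P E. pose proof (Derive_correct _ _ E) as D.
  pose proof (is_derive_sqrt f t (Derive f t) D P) as Ds.
  pose proof (is_derive_mult f (fun t => sqrt (f t)) t _ _ D Ds ltac:(intros; apply Rmult_comm)) as M.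
  replace (3 / 2 * sqrt (f t) * Derive f t) with
    (plus (mult (Derive f t) (sqrt (f t))) (mult (f t) (Derive f t / (2 * sqrt (f t))))); [exact M|].
  unfold plus, mult; simpl. pose proof (sqrt_lt_R0 _ P) as Hs.
  pose proof (sqrt_sqrt (f t) ltac:(lra)) as Hss.
  field_simplify; [|lra]. rewrite <- Hss at 2. field. lra.
Qed.

Lemma Rpower_mul_sqrt_div (x w : R) : 0 < x -> 0 < w ->
  Rpower (x * sqrt x / w) (2 / 3) = x / Rpower w (2 / 3).
Proof.
  intros Hx Hw.
  assert (E1 : x * sqrt x = Rpower x (1 + / 2))
    by (rewrite Rpower_plus, Rpower_1, Rpower_sqrt by auto; reflexivity).
  assert (E2 : / w = Rpower w (Ropp 1)) by (rewrite Rpower_Ropp, Rpower_1; auto).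
  unfold Rdiv. rewrite E1, E2, <- Rpower_mult_distr, !Rpower_mult by apply exp_pos.
  replace ((1 + / 2) * (2 * / 3)) with 1 by field.
  replace (Ropp 1 * (2 * / 3)) with (- (2 * / 3)) by ring.
  rewrite Rpower_1, Rpower_Ropp by auto. reflexivity.
Qed.

Lemma Rpower_collision_constant : Rpower (3 / 2 * sqrt 2) (2 / 3) = Rpower (9 / 2) (1 / 3).
Proof.
  assert (E : 3 / 2 * sqrt 2 = Rpower (9 / 2) (/ 2)).
  { rewrite Rpower_sqrt by lra. replace (9 / 2) with ((3 / 2) * (3 / 2) * 2) by field.
    rewrite sqrt_mult, sqrt_square by lra. reflexivity. }
  rewrite E, Rpower_mult. f_equal. field.
Qed.

(** * Picard iteration for Lipschitz planar systems *)

Definition lipschitz2 (H : R -> R -> R) (K : R) : Prop :=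
  forall x y x' y', Rabs (H x y - H x' y') <= K * (Rabs (x - x') + Rabs (y - y')).

Lemma continuous_lipschitz2_comp H K (u v : R -> R) t : lipschitz2 H K ->
  continuous u t -> continuous v t -> continuous (fun s => H (u s) (v s)) t.
Proof.
  intros HL Hu Hv. apply continuous_eps. intros eps Heps.
  set (K' := Rabs K + 1).
  assert (HK' : 0 < K') by (unfold K'; pose proof (Rabs_pos K); lra).
  assert (He : 0 < eps / (2 * K')) by (apply Rdiv_lt_0_compat; lra).
  destruct (proj1 (continuous_eps u t) Hu _ He) as [d1 [Hd1 H1]].
  destruct (proj1 (continuous_eps v t) Hv _ He) as [d2 [Hd2 H2]].
  exists (Rmin d1 d2). split; [apply Rmin_pos; auto|]. intros y Hy.
  specialize (H1 y (Rlt_le_trans _ _ _ Hy (Rmin_l _ _))).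
  specialize (H2 y (Rlt_le_trans _ _ _ Hy (Rmin_r _ _))).
  eapply Rle_lt_trans; [apply HL|].
  pose proof (Rabs_pos (u y - u t)); pose proof (Rabs_pos (v y - v t)).
  apply Rle_lt_trans with (K' * (Rabs (u y - u t) + Rabs (v y - v t))).
  - apply Rmult_le_compat_r; [lra|]. unfold K'; pose proof (Rle_abs K); lra.
  - replace eps with (K' * (eps / (2 * K') + eps / (2 * K'))) by (field; lra).
    apply Rmult_lt_compat_l; lra.
Qed.

Lemma abs_RInt_lipschitz2_diff H K (p1 p2 q1 q2 : R -> R) a b B :
  0 <= K -> lipschitz2 H K ->
  (forall s, Rmin a b <= s <= Rmax a b ->
     continuous p1 s /\ continuous p2 s /\ continuous q1 s /\ continuous q2 s) ->
  (forall s, Rmin a b <= s <= Rmax a b -> Rabs (q1 s - p1 s) + Rabs (q2 s - p2 s) <= B) ->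
  Rabs (RInt (fun s => H (q1 s) (q2 s)) a b - RInt (fun s => H (p1 s) (p2 s)) a b)
  <= Rabs (b - a) * (K * B).
Proof.
  intros HK HL Hc HB.
  assert (Eq : ex_RInt (fun s => H (q1 s) (q2 s)) a b).
  { apply (ex_RInt_continuous (V := R_CompleteNormedModule)). intros s Hs.
    apply continuous_lipschitz2_comp with K; auto; apply Hc; auto. }
  assert (Ep : ex_RInt (fun s => H (p1 s) (p2 s)) a b).
  { apply (ex_RInt_continuous (V := R_CompleteNormedModule)). intros s Hs.
    apply continuous_lipschitz2_comp with K; auto; apply Hc; auto. }
  change (Rabs (minus (RInt (fun s => H (q1 s) (q2 s)) a b)
                      (RInt (fun s => H (p1 s) (p2 s)) a b)) <= Rabs (b - a) * (K * B)).
  rewrite <- (RInt_minus (V := R_CompleteNormedModule)) by auto.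
  apply abs_RInt_le_const_abs; [apply (ex_RInt_minus (V := R_CompleteNormedModule)); auto|].
  intros s Hs. eapply Rle_trans; [apply HL|].
  apply Rmult_le_compat_l; auto.
Qed.

Definition pair_dist (p q : (R -> R) * (R -> R)) t :=
  Rabs (fst p t - fst q t) + Rabs (snd p t - snd q t).

Definition pair_continuous (p : (R -> R) * (R -> R)) t :=
  continuous (fst p) t /\ continuous (snd p) t.

Lemma pair_dist_nonneg p q t : 0 <= pair_dist p q t.
Proof.
  unfold pair_dist. pose proof (Rabs_pos (fst p t - fst q t)).
  pose proof (Rabs_pos (snd p t - snd q t)). lra.
Qed.

Lemma pair_dist_le0 p q t : pair_dist p q t <= 0 -> fst p t = fst q t /\ snd p t = snd q t.
Proof.
  unfold pair_dist. intros H. pose proof (Rabs_pos (fst p t - fst q t)).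
  pose proof (Rabs_pos (snd p t - snd q t)).
  split; apply Rminus_diag_uniq, Rabs_eq_0; lra.
Qed.

Lemma pair_dist_sym p q t : pair_dist p q t = pair_dist q p t.
Proof. unfold pair_dist. rewrite (Rabs_minus_sym (fst p t)), (Rabs_minus_sym (snd p t)). reflexivity. Qed.

Lemma pair_dist_triangle p q r t : pair_dist p r t <= pair_dist p q t + pair_dist q r t.
Proof.
  unfold pair_dist. pose proof (Rabs_sub_triang (fst p t) (fst q t) (fst r t)).
  pose proof (Rabs_sub_triang (snd p t) (snd q t) (snd r t)). lra.
Qed.

Lemma pair_dist_continuity_pt p q t : pair_continuous p t -> pair_continuous q t ->
  continuity_pt (pair_dist p q) t.
Proof.
  intros [Hp1 Hp2] [Hq1 Hq2].
  apply continuity_pt_plus; apply (continuity_pt_comp _ Rabs); try apply Rcontinuity_abs;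
    apply continuity_pt_minus; apply continuity_pt_filterlim; assumption.
Qed.

Section Picard.

Variables (F G : R -> R -> R) (K : R).
Hypothesis K_pos : 0 < K.
Hypothesis F_lip : lipschitz2 F K.
Hypothesis G_lip : lipschitz2 G K.

Definition system_solves_at (p : (R -> R) * (R -> R)) t :=
  is_derive (fst p) t (F (fst p t) (snd p t)) /\ is_derive (snd p) t (G (fst p t) (snd p t)).

Lemma system_solves_at_continuous p t : system_solves_at p t -> pair_continuous p t.
Proof.
  intros [D1 D2]. split; apply (ex_derive_continuous (V := R_NormedModule)); eexists; eassumption.
Qed.

Definition integral_map (t0 x0 y0 : R) (p : (R -> R) * (R -> R)) : (R -> R) * (R -> R) :=
  (fun t => x0 + RInt (fun s => F (fst p s) (snd p s)) t0 t,
   fun t => y0 + RInt (fun s => G (fst p s) (snd p s)) t0 t).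

Lemma integral_map_contraction t0 x0 y0 p q t B :
  Rabs (t - t0) <= / (4 * K) ->
  (forall s, Rmin t0 t <= s <= Rmax t0 t -> pair_continuous p s /\ pair_continuous q s) ->
  (forall s, Rmin t0 t <= s <= Rmax t0 t -> pair_dist p q s <= B) ->
  pair_dist (integral_map t0 x0 y0 p) (integral_map t0 x0 y0 q) t <= B / 2.
Proof.
  intros Ht Hc HB.
  assert (HB0 : 0 <= B).
  { apply Rle_trans with (pair_dist p q t0); [apply pair_dist_nonneg|].
    apply HB. split; [apply Rmin_l|apply Rmax_l]. }
  assert (Hc' : forall s, Rmin t0 t <= s <= Rmax t0 t ->
    continuous (fst q) s /\ continuous (snd q) s /\ continuous (fst p) s /\ continuous (snd p) s)
    by (intros s Hs; destruct (Hc s Hs) as [[? ?] [? ?]]; tauto).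
  pose proof (abs_RInt_lipschitz2_diff F K _ _ _ _ t0 t B ltac:(lra) F_lip Hc' HB).
  pose proof (abs_RInt_lipschitz2_diff G K _ _ _ _ t0 t B ltac:(lra) G_lip Hc' HB).
  assert (Rabs (t - t0) * (K * B) <= B / 4).
  { replace (B / 4) with (/ (4 * K) * (K * B)) by (field; lra).
    apply Rmult_le_compat_r; [apply Rmult_le_pos|]; lra. }
  assert (E : forall c a b : R, c + a - (c + b) = a - b) by (intros; ring).
  unfold pair_dist, integral_map; simpl. rewrite !E. lra.
Qed.

Lemma integral_map_continuous t0 x0 y0 p t :
  (forall s, pair_continuous p s) -> pair_continuous (integral_map t0 x0 y0 p) t.
Proof.
  intros Hp. split; apply (ex_derive_continuous (V := R_NormedModule)); eexists;
    apply (is_derive_const_plus_RInt _ _ t0 (Rabs (t - t0) + 1)); try lra;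
    intros s _; apply continuous_lipschitz2_comp with K; auto; apply Hp.
Qed.

Lemma integral_map_fixed (p : (R -> R) * (R -> R)) a b :
  (forall t, a <= t <= b -> system_solves_at p t) ->
  forall t, a <= t <= b -> pair_dist (integral_map a (fst p a) (snd p a) p) p t = 0.
Proof.
  intros Hp t Ht.
  assert (Hs : forall s, Rmin a t <= s <= Rmax a t ->
    system_solves_at p s /\ continuous (fst p) s /\ continuous (snd p) s).
  { intros s Hs. rewrite Rmin_left, Rmax_right in Hs by lra.
    pose proof (Hp s ltac:(lra)) as S. destruct (system_solves_at_continuous p s S). tauto. }
  unfold pair_dist, integral_map; simpl.
  rewrite (RInt_is_derive (fst p)), (RInt_is_derive (snd p)).
  - replace (fst p a + (fst p t - fst p a) - fst p t) with 0 by ring.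
    replace (snd p a + (snd p t - snd p a) - snd p t) with 0 by ring.
    rewrite Rabs_R0. ring.
  - intros s H. destruct (Hs s H) as [[? ?] [? ?]].
    split; [auto|apply continuous_lipschitz2_comp with K; auto].
  - intros s H. destruct (Hs s H) as [[? ?] [? ?]].
    split; [auto|apply continuous_lipschitz2_comp with K; auto].
Qed.

Lemma system_uniqueness (p q : (R -> R) * (R -> R)) a b :
  a <= b -> b - a <= / (4 * K) ->
  (forall t, a <= t <= b -> system_solves_at p t) ->
  (forall t, a <= t <= b -> system_solves_at q t) ->
  fst p a = fst q a -> snd p a = snd q a ->
  forall t, a <= t <= b -> fst p t = fst q t /\ snd p t = snd q t.
Proof.
  intros Hab Hlen Hp Hq Ha1 Ha2.
  destruct (continuity_ab_maj (pair_dist p q) a b Hab) as [m [Hm Hmab]].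
  { intros c Hc. apply pair_dist_continuity_pt; apply system_solves_at_continuous; auto. }
  assert (Bound : forall n t, a <= t <= b -> pair_dist p q t <= pair_dist p q m / 2 ^ n).
  { induction n as [|n IH]; intros t Ht.
    - rewrite Rdiv_1_r. apply Hm, Ht.
    - replace (pair_dist p q m / 2 ^ S n) with (pair_dist p q m / 2 ^ n / 2)
        by (simpl; field; apply pow_nonzero; lra).
      set (I := integral_map a (fst q a) (snd q a)).
      assert (Ep : pair_dist p (I p) t = 0)
        by (rewrite pair_dist_sym; unfold I; rewrite <- Ha1, <- Ha2;
            exact (integral_map_fixed p a b Hp t Ht)).
      assert (Eq : pair_dist (I q) q t = 0) by exact (integral_map_fixed q a b Hq t Ht).
      pose proof (pair_dist_triangle p (I p) q t).
      pose proof (pair_dist_triangle (I p) (I q) q t).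
      assert (pair_dist (I p) (I q) t <= pair_dist p q m / 2 ^ n / 2).
      { apply integral_map_contraction.
        - rewrite Rabs_right; lra.
        - intros s Hs. rewrite Rmin_left, Rmax_right in Hs by lra.
          split; apply system_solves_at_continuous; [apply Hp|apply Hq]; lra.
        - intros s Hs. rewrite Rmin_left, Rmax_right in Hs by lra. apply IH. lra. }
      lra. }
  intros t Ht. exact (pair_dist_le0 _ _ _ (le_div_pow2_le0 _ _ (fun n => Bound n t Ht))).
Qed.

Variables (t0 x0 y0 : R).

Fixpoint picard (n : nat) : (R -> R) * (R -> R) :=
  match n with
  | O => (fun _ => x0, fun _ => y0)
  | S n => integral_map t0 x0 y0 (picard n)
  end.

Lemma picard_continuous n t : pair_continuous (picard n) t.
Proof.
  revert t; induction n as [|n IH]; intros t.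
  - split; apply continuous_const.
  - apply integral_map_continuous, IH.
Qed.

Definition picard_A := / (4 * K) * (Rabs (F x0 y0) + Rabs (G x0 y0)).

Lemma picard_A_nonneg : 0 <= picard_A.
Proof.
  unfold picard_A. pose proof (Rabs_pos (F x0 y0)); pose proof (Rabs_pos (G x0 y0)).
  assert (0 < / (4 * K)) by (apply Rinv_0_lt_compat; lra). nra.
Qed.

Lemma picard_increment n t : Rabs (t - t0) <= / (4 * K) ->
  pair_dist (picard (S n)) (picard n) t <= picard_A / 2 ^ n.
Proof.
  revert t; induction n as [|n IH]; intros t Ht.
  - unfold pair_dist, picard_A; simpl. rewrite !RInt_const.
    change (Rabs (x0 + (t - t0) * F x0 y0 - x0) + Rabs (y0 + (t - t0) * G x0 y0 - y0)
      <= / (4 * K) * (Rabs (F x0 y0) + Rabs (G x0 y0)) / 1).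
    replace (x0 + (t - t0) * F x0 y0 - x0) with ((t - t0) * F x0 y0) by ring.
    replace (y0 + (t - t0) * G x0 y0 - y0) with ((t - t0) * G x0 y0) by ring.
    rewrite !Rabs_mult, Rdiv_1_r, <- Rmult_plus_distr_l.
    apply Rmult_le_compat_r; [pose proof (Rabs_pos (F x0 y0)); pose proof (Rabs_pos (G x0 y0))|]; lra.
  - replace (picard_A / 2 ^ S n) with (picard_A / 2 ^ n / 2)
      by (simpl; field; apply pow_nonzero; lra).
    apply integral_map_contraction; auto.
    + intros s _. exact (conj (picard_continuous (S n) s) (picard_continuous n s)).
    + intros s Hs. apply IH. pose proof (Rabs_between t0 t s Hs). lra.
Qed.

Lemma picard_cauchy n p t : Rabs (t - t0) <= / (4 * K) ->
  pair_dist (picard (n + p)) (picard n) t <= 2 * picard_A / 2 ^ n - 2 * picard_A / 2 ^ (n + p).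
Proof.
  intros Ht. induction p as [|p IH].
  - unfold pair_dist. rewrite Nat.add_0_r, !Rminus_diag, Rabs_R0. lra.
  - rewrite Nat.add_succ_r.
    pose proof (picard_increment (n + p) t Ht).
    pose proof (pair_dist_triangle (picard (S (n + p))) (picard (n + p)) (picard n) t).
    replace (2 * picard_A / 2 ^ S (n + p)) with (picard_A / 2 ^ (n + p))
      by (simpl; field; apply pow_nonzero; lra).
    unfold Rdiv in *. lra.
Qed.

Lemma picard_cauchy_le n p t : Rabs (t - t0) <= / (4 * K) ->
  pair_dist (picard (n + p)) (picard n) t <= 2 * picard_A / 2 ^ n.
Proof.
  intros Ht. pose proof (picard_cauchy n p t Ht).
  assert (0 <= 2 * picard_A / 2 ^ (n + p))
    by (pose proof picard_A_nonneg; apply Rdiv_le_0_compat; [|apply pow_lt]; lra).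
  lra.
Qed.

Definition picard_limit : (R -> R) * (R -> R) :=
  (fun t => real (Lim_seq (fun n => fst (picard n) t)),
   fun t => real (Lim_seq (fun n => snd (picard n) t))).

Lemma picard_limit_error n t : Rabs (t - t0) <= / (4 * K) ->
  pair_dist picard_limit (picard n) t <= 2 * picard_A / 2 ^ n.
Proof.
  intros Ht.
  assert (Cx : is_lim_seq (fun m => fst (picard m) t) (fst picard_limit t)).
  { apply (is_lim_seq_pow2_cauchy _ (2 * picard_A)). intros m p.
    pose proof (picard_cauchy_le m p t Ht). unfold pair_dist in *.
    pose proof (Rabs_pos (snd (picard (m + p)) t - snd (picard m) t)). lra. }
  assert (Cy : is_lim_seq (fun m => snd (picard m) t) (snd picard_limit t)).
  { apply (is_lim_seq_pow2_cauchy _ (2 * picard_A)). intros m p.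
    pose proof (picard_cauchy_le m p t Ht). unfold pair_dist in *.
    pose proof (Rabs_pos (fst (picard (m + p)) t - fst (picard m) t)). lra. }
  apply (is_lim_seq_incr_n _ n) in Cx, Cy.
  pose proof (is_lim_seq_plus' _ _ _ _
    (is_lim_seq_abs _ _ (is_lim_seq_minus' _ _ _ _ Cx (is_lim_seq_const (fst (picard n) t))))
    (is_lim_seq_abs _ _ (is_lim_seq_minus' _ _ _ _ Cy (is_lim_seq_const (snd (picard n) t)))))
    as L.
  refine (is_lim_seq_le _ _ _ _ _ L (is_lim_seq_const _)).
  intros m. rewrite Nat.add_comm. exact (picard_cauchy_le n m t Ht).
Qed.

Lemma picard_limit_continuous t : Rabs (t - t0) < / (4 * K) -> pair_continuous picard_limit t.
Proof.
  intros Ht. assert (Hrho : 0 < / (4 * K) - Rabs (t - t0)) by lra.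
  assert (E : forall n s, Rabs (s - t) < / (4 * K) - Rabs (t - t0) ->
    pair_dist picard_limit (picard n) s <= 2 * picard_A / 2 ^ n).
  { intros n s Hs. apply picard_limit_error. pose proof (Rabs_sub_triang s t t0). lra. }
  unfold pair_dist in E. split.
  - apply (continuous_pow2_uniform_limit (fun n => fst (picard n)) _ t _ (2 * picard_A) Hrho);
      [intros n; apply picard_continuous|].
    intros n s Hs. specialize (E n s Hs).
    pose proof (Rabs_pos (snd picard_limit s - snd (picard n) s)). lra.
  - apply (continuous_pow2_uniform_limit (fun n => snd (picard n)) _ t _ (2 * picard_A) Hrho);
      [intros n; apply picard_continuous|].
    intros n s Hs. specialize (E n s Hs).
    pose proof (Rabs_pos (fst picard_limit s - fst (picard n) s)). lra.
Qed.

Lemma picard_limit_fixed t : Rabs (t - t0) < / (4 * K) ->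
  pair_dist picard_limit (integral_map t0 x0 y0 picard_limit) t = 0.
Proof.
  intros Ht. apply Rle_antisym; [|apply pair_dist_nonneg].
  apply (le_div_pow2_le0 _ (2 * picard_A)). intros n.
  pose proof (picard_limit_error (S n) t (Rlt_le _ _ Ht)).
  pose proof (pair_dist_triangle picard_limit (picard (S n)) (integral_map t0 x0 y0 picard_limit) t).
  assert (pair_dist (picard (S n)) (integral_map t0 x0 y0 picard_limit) t <= 2 * picard_A / 2 ^ n / 2).
  { apply integral_map_contraction; [lra| |].
    - intros s Hs. split; [apply picard_continuous|apply picard_limit_continuous].
      pose proof (Rabs_between t0 t s Hs). lra.
    - intros s Hs. rewrite pair_dist_sym. apply picard_limit_error.
      pose proof (Rabs_between t0 t s Hs). lra. }
  replace (2 * picard_A / 2 ^ S n) with (2 * picard_A / 2 ^ n / 2) in *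
    by (simpl; field; apply pow_nonzero; lra).
  lra.
Qed.

Theorem picard_existence : exists u v : R -> R, u t0 = x0 /\ v t0 = y0 /\
  forall t, Rabs (t - t0) < / (4 * K) ->
    is_derive u t (F (u t) (v t)) /\ is_derive v t (G (u t) (v t)).
Proof.
  assert (Fix : forall t, Rabs (t - t0) < / (4 * K) ->
    fst picard_limit t = fst (integral_map t0 x0 y0 picard_limit) t /\
    snd picard_limit t = snd (integral_map t0 x0 y0 picard_limit) t)
    by (intros t Ht; apply pair_dist_le0; rewrite (picard_limit_fixed t Ht); lra).
  assert (H0 : Rabs (t0 - t0) < / (4 * K))
    by (rewrite Rminus_diag, Rabs_R0; apply Rinv_0_lt_compat; lra).
  exists (fst picard_limit), (snd picard_limit).
  destruct (Fix t0 H0) as [I1 I2]. cbn [integral_map fst snd] in I1, I2.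
  rewrite RInt_point in I1, I2.
  split; [rewrite I1; apply Rplus_0_r|]. split; [rewrite I2; apply Rplus_0_r|].
  intros t Ht.
  assert (Loc : locally t (fun s => Rabs (s - t0) < / (4 * K))).
  { assert (Hp : 0 < / (4 * K) - Rabs (t - t0)) by lra. exists (mkposreal _ Hp).
    intros y Hy. change (Rabs (y - t) < / (4 * K) - Rabs (t - t0)) in Hy.
    pose proof (Rabs_sub_triang y t t0). simpl in *. lra. }
  assert (Cont : forall H, lipschitz2 H K -> forall s, Rabs (s - t0) < / (4 * K) ->
             continuous (fun s => H (fst picard_limit s) (snd picard_limit s)) s).
  { intros H HH s Hs. destruct (picard_limit_continuous s Hs).
    apply continuous_lipschitz2_comp with K; auto. }
  split.
  - apply (is_derive_ext_loc (fst (integral_map t0 x0 y0 picard_limit))).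
    + eapply filter_imp; [|exact Loc]. intros s Hs. symmetry. apply (Fix s Hs).
    + apply (is_derive_const_plus_RInt (fun s => F (fst picard_limit s) (snd picard_limit s))
        x0 t0 (/ (4 * K))); auto.
  - apply (is_derive_ext_loc (snd (integral_map t0 x0 y0 picard_limit))).
    + eapply filter_imp; [|exact Loc]. intros s Hs. symmetry. apply (Fix s Hs).
    + apply (is_derive_const_plus_RInt (fun s => G (fst picard_limit s) (snd picard_limit s))
        y0 t0 (/ (4 * K))); auto.
Qed.

End Picard.

(** * Solutions and the Liénard system *)

Definition solves_at (delta r : R -> R) (t : R) : Prop :=
  0 < r t /\ ex_derive r t /\ ex_derive (Derive r) t /\
  Derive (Derive r) t + delta (r t) * Derive r t = - / (r t ^ 2).

Lemma solves_at_ext_loc delta (f g : R -> R) t :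
  locally t (fun x => f x = g x) -> solves_at delta g t -> solves_at delta f t.
Proof.
  intros Hfg [P [E1 [E2 Eq]]].
  assert (HD : locally t (fun x => Derive g x = Derive f x)).
  { apply (filter_imp (fun x => locally x (fun y => f y = g y))); [|apply locally_locally, Hfg].
    intros x Hx. symmetry. apply Derive_ext_loc, Hx. }
  assert (Hgf : locally t (fun x => g x = f x))
    by (apply (filter_imp _ _ (fun x Hx => eq_sym Hx) Hfg)).
  rewrite (Derive_ext_loc _ _ _ HD) in Eq.
  unfold solves_at. rewrite (locally_singleton _ _ Hfg), <- (locally_singleton _ _ HD).
  exact (conj P (conj (ex_derive_ext_loc _ _ _ Hgf E1) (conj (ex_derive_ext_loc _ _ _ HD E2) Eq))).
Qed.

Lemma Derive_sq_energy (r : R -> R) t : 0 < r t -> Derive r t ^ 2 = 2 * energy r t + 2 / r t.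
Proof. intros. unfold energy. field. lra. Qed.

Definition clamp lo hi x := Rmax lo (Rmin x hi).

Lemma clamp_1_lipschitz lo hi x x' : Rabs (clamp lo hi x - clamp lo hi x') <= Rabs (x - x').
Proof. unfold clamp, Rmax, Rmin. repeat destruct Rle_dec; unfold Rabs; repeat destruct Rcase_abs; lra. Qed.

Lemma clamp_range lo hi x : lo <= hi -> lo <= clamp lo hi x <= hi.
Proof. intros. unfold clamp, Rmax, Rmin. repeat destruct Rle_dec; lra. Qed.

Lemma clamp_id lo hi x : lo <= x <= hi -> clamp lo hi x = x.
Proof. intros. unfold clamp, Rmax, Rmin. repeat destruct Rle_dec; lra. Qed.

Lemma inv_sq_lipschitz lo hi a b : 0 < lo -> lo <= a <= hi -> lo <= b <= hi ->
  Rabs (/ a ^ 2 - / b ^ 2) <= 2 * hi / lo ^ 4 * Rabs (a - b).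
Proof.
  intros Hlo Ha Hb.
  replace (/ a ^ 2 - / b ^ 2) with ((b - a) * ((a + b) / (a ^ 2 * b ^ 2))) by (field; lra).
  rewrite Rabs_mult, Rabs_minus_sym, Rmult_comm. apply Rmult_le_compat_r; [apply Rabs_pos|].
  assert (Hab : 0 < a ^ 2 * b ^ 2) by (apply Rmult_lt_0_compat; apply pow_lt; lra).
  assert (Hlo4 : lo ^ 4 <= a ^ 2 * b ^ 2).
  { replace (lo ^ 4) with (lo ^ 2 * lo ^ 2) by ring.
    apply Rmult_le_compat; try (apply pow_le; lra); apply pow_incr; lra. }
  rewrite Rabs_right by (apply Rle_ge, Rdiv_le_0_compat; lra).
  unfold Rdiv. apply Rle_trans with ((a + b) * / lo ^ 4).
  - apply Rmult_le_compat_l; [lra|]. apply Rinv_le_contravar; [apply pow_lt|]; lra.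
  - apply Rmult_le_compat_r; [left; apply Rinv_0_lt_compat, pow_lt|]; lra.
Qed.

(* With [D' = delta], the equation [r'' + delta(r) r' = -1/r^2] is the first-order system
   [x' = y - D(x), y' = -1/x^2] in the Liénard variables [(x, y) = (r, r' + D(r))].
   Clamping [x] into [[lo, hi]] makes the system globally Lipschitz without changing it
   where [lo < x < hi]. *)
Definition lienard_x (delta : R -> R) lo hi (x y : R) := y - RInt delta lo (clamp lo hi x).
Definition lienard_y lo hi (x y : R) := - / clamp lo hi x ^ 2.

Section Lienard.

Variables (delta : R -> R) (lo hi : R).
Hypothesis delta_adm : admissible_delta delta.
Hypothesis lo_pos : 0 < lo.
Hypothesis lo_le_hi : lo <= hi.

Lemma delta_continuous x : 0 < x -> continuous delta x.
Proof.
  intros Hx. apply (ex_derive_continuous (V := R_NormedModule)), (proj2 (proj2 delta_adm) x Hx).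
Qed.

Lemma is_derive_RInt_delta x : 0 < x -> is_derive (RInt delta lo) x (delta x).
Proof.
  intros Hx. apply (is_derive_RInt delta (RInt delta lo) lo x); [|apply delta_continuous, Hx].
  assert (Hp : 0 < x / 2) by lra. exists (mkposreal _ Hp). intros y Hy.
  change (Rabs (y - x) < x / 2) in Hy.
  apply (RInt_correct (V := R_CompleteNormedModule)), ex_RInt_continuous.
  intros z Hz. apply delta_continuous. unfold Rmin, Rmax in Hz. destruct Rle_dec;
    revert Hy; unfold Rabs; destruct Rcase_abs; intros; lra.
Qed.

Lemma RInt_delta_lipschitz M a b : (forall x, 0 < x -> Rabs (delta x) <= M) ->
  lo <= a -> lo <= b -> Rabs (RInt delta lo a - RInt delta lo b) <= M * Rabs (a - b).
Proof.
  intros HM Ha Hb.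
  assert (Key : forall a b, lo <= a <= b -> Rabs (RInt delta lo b - RInt delta lo a) <= M * Rabs (b - a)).
  { clear a b Ha Hb. intros a b Hab.
    destruct (MVT_le (RInt delta lo) delta a b ltac:(lra)) as [c [Hc E]].
    { intros x Hx. apply is_derive_RInt_delta. lra. }
    rewrite E, Rabs_mult. apply Rmult_le_compat_r; [apply Rabs_pos|apply HM; lra]. }
  destruct (Rle_dec a b).
  - rewrite Rabs_minus_sym, (Rabs_minus_sym a). apply Key; lra.
  - apply Key; lra.
Qed.

Lemma lienard_lipschitz M : 0 <= M -> (forall x, 0 < x -> Rabs (delta x) <= M) ->
  lipschitz2 (lienard_x delta lo hi) (1 + M + 2 * hi / lo ^ 4) /\
  lipschitz2 (lienard_y lo hi) (1 + M + 2 * hi / lo ^ 4).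
Proof.
  intros HM0 HM. assert (Hc : 0 <= 2 * hi / lo ^ 4) by (apply Rdiv_le_0_compat; [|apply pow_lt]; lra).
  split; intros x y x' y'; unfold lienard_x, lienard_y;
    pose proof (clamp_range lo hi x lo_le_hi); pose proof (clamp_range lo hi x' lo_le_hi);
    pose proof (clamp_1_lipschitz lo hi x x');
    pose proof (Rabs_pos (x - x')); pose proof (Rabs_pos (y - y')).
  - pose proof (RInt_delta_lipschitz M (clamp lo hi x) (clamp lo hi x') HM ltac:(lra) ltac:(lra)).
    pose proof (Rabs_triang (y - y') (- (RInt delta lo (clamp lo hi x) - RInt delta lo (clamp lo hi x')))).
    rewrite Rabs_Ropp in *.
    replace (y - y' + - (RInt delta lo (clamp lo hi x) - RInt delta lo (clamp lo hi x')))
      with (y - RInt delta lo (clamp lo hi x) - (y' - RInt delta lo (clamp lo hi x'))) in * by ring.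
    assert (M * Rabs (clamp lo hi x - clamp lo hi x') <= M * Rabs (x - x'))
      by (apply Rmult_le_compat_l; lra).
    nra.
  - pose proof (inv_sq_lipschitz lo hi (clamp lo hi x) (clamp lo hi x') lo_pos ltac:(lra) ltac:(lra)).
    replace (- / clamp lo hi x ^ 2 - - / clamp lo hi x' ^ 2)
      with (- (/ clamp lo hi x ^ 2 - / clamp lo hi x' ^ 2)) by ring.
    rewrite Rabs_Ropp.
    assert (2 * hi / lo ^ 4 * Rabs (clamp lo hi x - clamp lo hi x') <= 2 * hi / lo ^ 4 * Rabs (x - x'))
      by (apply Rmult_le_compat_l; lra).
    nra.
Qed.

Lemma lienard_of_solution (r : R -> R) s : solves_at delta r s -> lo < r s < hi ->
  let y := fun s => Derive r s + RInt delta lo (clamp lo hi (r s)) in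
  is_derive r s (lienard_x delta lo hi (r s) (y s)) /\
  is_derive y s (lienard_y lo hi (r s) (y s)).
Proof.
  intros [P [E1 [E2 Eq]]] Hb y. unfold lienard_x, lienard_y, y.
  rewrite clamp_id by lra. split.
  - replace (Derive r s + RInt delta lo (r s) - RInt delta lo (r s)) with (Derive r s) by ring.
    apply Derive_correct, E1.
  - assert (Hc : continuous r s) by apply (ex_derive_continuous (V := R_NormedModule)), E1.
    assert (L : locally s (fun s' => clamp lo hi (r s') = r s')).
    { destruct (proj1 (continuous_eps r s) Hc (Rmin (r s - lo) (hi - r s))) as [d [Hd H]];
        [apply Rmin_pos; lra|].
      exists (mkposreal d Hd). intros x Hx. specialize (H x Hx).
      pose proof (Rmin_l (r s - lo) (hi - r s)); pose proof (Rmin_r (r s - lo) (hi - r s)).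
      apply clamp_id. revert H; unfold Rabs; destruct Rcase_abs; intros; lra. }
    apply (is_derive_ext_loc (fun s => Derive r s + RInt delta lo (r s))).
    { eapply filter_imp; [|exact L]. intros x Hx. simpl. rewrite Hx. reflexivity. }
    replace (- / (r s ^ 2)) with (plus (Derive (Derive r) s) (scal (Derive r s) (delta (r s))))
      by (rewrite <- Eq; unfold plus, scal; simpl; unfold mult; simpl; ring).
    apply (is_derive_plus (Derive r) (fun s => RInt delta lo (r s))); [apply Derive_correct, E2|].
    apply (is_derive_comp (RInt delta lo) r); [apply is_derive_RInt_delta; lra|apply Derive_correct, E1].
Qed.

Lemma solution_of_lienard (u v : R -> R) t :
  locally t (fun s => is_derive u s (lienard_x delta lo hi (u s) (v s)) /\
                      is_derive v s (lienard_y lo hi (u s) (v s)) /\ lo < u s < hi) ->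
  solves_at delta u t.
Proof.
  intros H.
  assert (HD : locally t (fun s => v s - RInt delta lo (u s) = Derive u s)).
  { eapply filter_imp; [|exact H]. intros s [D1 [_ Hb]].
    rewrite (is_derive_unique _ _ _ D1). unfold lienard_x. rewrite clamp_id; auto. lra. }
  destruct (locally_singleton _ _ H) as [D1 [D2 Hb]].
  unfold lienard_x, lienard_y in D1, D2. rewrite clamp_id in D1, D2 by lra.
  assert (Hg : is_derive (fun s => v s - RInt delta lo (u s)) t
     (- / u t ^ 2 - (v t - RInt delta lo (u t)) * delta (u t))).
  { apply (is_derive_minus v (fun s => RInt delta lo (u s))); [exact D2|].
    apply (is_derive_comp (RInt delta lo) u); [apply is_derive_RInt_delta; lra|exact D1]. }
  pose proof (is_derive_ext_loc _ _ _ _ HD Hg) as HD2.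
  split; [lra|]. split; [eexists; exact D1|]. split; [eexists; exact HD2|].
  rewrite (is_derive_unique _ _ _ HD2), (is_derive_unique _ _ _ D1). field. lra.
Qed.

End Lienard.

(** * Continuation, collision and the collision rate *)

Lemma solution_glue delta alpha (omega a0 b : R) (r u : R -> R) :
  is_solution delta alpha omega r -> a0 < omega ->
  (forall t, a0 < t < omega -> u t = r t) ->
  (forall t, a0 < t < b -> solves_at delta u t) ->
  is_solution delta alpha b (fun t => if Rlt_dec t omega then r t else u t).
Proof.
  intros Hr Ha0 Hur Hu t Hat Htb.
  destruct t as [t| |]; [|contradiction|destruct alpha; contradiction].
  change (solves_at delta (fun t => if Rlt_dec t omega then r t else u t) t).
  destruct (Rlt_dec t omega) as [Hlt|Hge].
  - apply (solves_at_ext_loc _ _ r); [|exact (Hr t Hat Hlt)].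
    apply (filter_imp (fun s => t - 1 < s < omega)); [|apply locally_interval; lra].
    intros s Hs. destruct (Rlt_dec s omega); [reflexivity|lra].
  - apply (solves_at_ext_loc _ _ u); [|apply Hu; simpl in Htb; lra].
    apply (filter_imp (fun s => a0 < s < t + 1)); [|apply locally_interval; lra].
    intros s Hs. destruct (Rlt_dec s omega); [symmetry; apply Hur|]; lra.
Qed.

Section Solution.

Variables (delta : R -> R) (alpha : Rbar) (omega : R) (r : R -> R).
Hypothesis delta_adm : admissible_delta delta.
Hypothesis r_sol : is_solution delta alpha omega r.

Lemma r_solves_at (t : R) : Rbar_lt alpha t -> t < omega -> solves_at delta r t.
Proof. exact (r_sol t). Qed.

Lemma energy_derive (t : R) : Rbar_lt alpha t -> t < omega ->
  is_derive (energy r) t (- delta (r t) * Derive r t ^ 2).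
Proof.
  intros H1 H2. destruct (r_solves_at t H1 H2) as [P [E1 [E2 Eq]]].
  unfold energy. auto_derive; [repeat split; auto; apply Rgt_not_eq, P|].
  change (Derive (fun x => Derive r x) t) with (Derive (Derive r) t).
  change (Derive (fun x => r x) t) with (Derive r t).
  replace (Derive (Derive r) t) with (- / (r t ^ 2) - delta (r t) * Derive r t)
    by lra.
  field. lra.
Qed.

Lemma energy_nonincreasing (a b : R) : Rbar_lt alpha a -> a <= b -> b < omega ->
  energy r b <= energy r a.
Proof.
  intros Ha Hab Hb.
  destruct (MVT_le (energy r) (fun t => - delta (r t) * Derive r t ^ 2) a b Hab) as [c [Hc E]].
  { intros x Hx. apply energy_derive; [apply (Rbar_lt_R_le _ a); [exact Ha|]|]; lra. }
  assert (Hc' : Rbar_lt alpha c) by (apply (Rbar_lt_R_le _ a); [exact Ha|lra]).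
  destruct (r_solves_at c Hc' ltac:(lra)) as [P _].
  pose proof (proj1 delta_adm (r c) P).
  assert (0 <= delta (r c) * Derive r c ^ 2 * (b - a))
    by (apply Rmult_le_pos; [apply Rmult_le_pos; [|apply pow2_ge_0]|]; lra).
  lra.
Qed.

Lemma solution_bounded_above (c T1 : R) : Rbar_lt alpha T1 -> T1 < omega -> 0 < c ->
  (forall t, T1 <= t < omega -> c <= r t) ->
  exists R2, forall t, T1 <= t < omega -> r t <= R2.
Proof.
  intros HT1 HT1w Hc Hlow.
  assert (Hdom : forall t, T1 <= t -> Rbar_lt alpha t)
    by (intros t Ht; exact (Rbar_lt_R_le _ _ _ HT1 Ht)).
  set (B := 2 * Rabs (energy r T1) + 2 / c).
  assert (HB : forall t, T1 <= t < omega -> Derive r t ^ 2 <= B).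
  { intros t Ht. destruct (r_solves_at t (Hdom t ltac:(lra)) ltac:(lra)) as [P _].
    rewrite Derive_sq_energy by exact P.
    pose proof (energy_nonincreasing T1 t HT1 ltac:(lra) ltac:(lra)).
    assert (/ r t <= / c) by (apply Rinv_le_contravar; auto; apply Hlow; lra).
    pose proof (Rle_abs (energy r T1)). unfold B, Rdiv. lra. }
  assert (HB0 : 0 <= B) by (pose proof (HB T1 ltac:(lra)); pose proof (pow2_ge_0 (Derive r T1)); lra).
  exists (r T1 + (B + 1) * (omega - T1)). intros t Ht.
  destruct (MVT_le r (Derive r) T1 t ltac:(lra)) as [xi [Hxi E]].
  { intros x Hx. apply Derive_correct, (r_solves_at x (Hdom x ltac:(lra)) ltac:(lra)). }
  pose proof (HB xi ltac:(lra)).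
  assert (Derive r xi <= B + 1) by nra.
  assert (Derive r xi * (t - T1) <= (B + 1) * (omega - T1)) by nra.
  lra.
Qed.

Lemma lienard_continuation (lo hi T1 : R) : 0 < lo <= hi ->
  Rbar_lt alpha T1 -> T1 < omega -> (forall t, T1 <= t < omega -> lo < r t < hi) ->
  exists (u v : R -> R) (t1 b : R), T1 <= t1 < omega /\ omega < b /\
    (forall t, t1 <= t < omega -> u t = r t) /\
    (forall t, t1 <= t < b -> is_derive u t (lienard_x delta lo hi (u t) (v t)) /\
                              is_derive v t (lienard_y lo hi (u t) (v t))).
Proof.
  intros Hlo HT1 HT1w Hr.
  destruct delta_adm as [_ [[M HM] _]].
  assert (HM0 : 0 <= M) by (pose proof (HM 1 Rlt_0_1); pose proof (Rabs_pos (delta 1)); lra).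
  set (K := 1 + M + 2 * hi / lo ^ 4).
  assert (HK : 0 < K)
    by (assert (0 <= 2 * hi / lo ^ 4) by (apply Rdiv_le_0_compat; [|apply pow_lt]; lra);
        unfold K; lra).
  destruct (lienard_lipschitz delta lo hi delta_adm ltac:(lra) ltac:(lra) M HM0 HM) as [LF LG].
  fold K in LF, LG.
  set (h := / (4 * K)). assert (Hh : 0 < h) by (apply Rinv_0_lt_compat; lra).
  set (t1 := Rmax T1 (omega - h / 2)).
  assert (Ht1 : T1 <= t1 /\ omega - h / 2 <= t1 /\ t1 < omega)
    by (unfold t1, Rmax; destruct Rle_dec; lra).
  set (y := fun s => Derive r s + RInt delta lo (clamp lo hi (r s))).
  destruct (picard_existence _ _ K HK LF LG t1 (r t1) (y t1)) as [u [v [Hu0 [Hv0 Hder]]]].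
  fold h in Hder.
  exists u, v, t1, (t1 + h). split; [lra|]. split; [lra|]. split.
  - intros t Ht.
    refine (proj1 (system_uniqueness _ _ K HK LF LG (u, v) (r, y) t1 t _ _ _ _ Hu0 Hv0 t _));
      fold h; try lra.
    + intros s Hs. apply Hder. rewrite Rabs_right; lra.
    + intros s Hs. apply (lienard_of_solution delta lo hi delta_adm ltac:(lra) r s).
      * apply r_solves_at; [exact (Rbar_lt_R_le alpha T1 s HT1 ltac:(lra))|lra].
      * apply Hr. lra.
  - intros t Ht. apply Hder. rewrite Rabs_right; lra.
Qed.

Lemma solution_continues (lo hi c R2 T1 : R) : 0 < lo < c -> R2 < hi ->
  Rbar_lt alpha T1 -> T1 < omega ->
  (forall t, T1 <= t < omega -> c <= r t <= R2) ->
  exists (a0 b : R) (u : R -> R), a0 < omega < b /\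
    (forall t, a0 < t < omega -> u t = r t) /\ (forall t, a0 < t < b -> solves_at delta u t).
Proof.
  intros Hlo Hhi HT1 HT1w Hr.
  assert (Hlohi : lo <= hi) by (pose proof (Hr T1 ltac:(lra)); lra).
  destruct (lienard_continuation lo hi T1 ltac:(lra) HT1 HT1w) as [u [v [t1 [b [Ht1 [Hb [Agree Hder]]]]]]].
  { intros t Ht. pose proof (Hr t Ht). lra. }
  assert (Hcu : continuous u omega).
  { destruct (Hder omega) as [D _]; [lra|].
    apply (ex_derive_continuous (V := R_NormedModule)). eexists; exact D. }
  assert (Huw : c <= u omega <= R2).
  { apply (continuous_at_left_bounds u omega t1); [lra|exact Hcu|].
    intros t Ht. rewrite Agree by lra. apply Hr. lra. }
  destruct (proj1 (continuous_eps u omega) Hcu (Rmin (u omega - lo) (hi - u omega)))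
    as [d [Hd Hud]]; [apply Rmin_pos; lra|].
  pose proof (Rmin_l (u omega - lo) (hi - u omega)).
  pose proof (Rmin_r (u omega - lo) (hi - u omega)).
  set (eps := Rmin d (b - omega)).
  assert (Heps : 0 < eps /\ eps <= d /\ eps <= b - omega)
    by (unfold eps; split; [apply Rmin_pos|split; [apply Rmin_l|apply Rmin_r]]; lra).
  set (a0 := Rmax t1 (omega - eps)).
  assert (Ha0 : t1 <= a0 /\ omega - eps <= a0 /\ a0 < omega)
    by (unfold a0, Rmax; destruct Rle_dec; lra).
  exists a0, (omega + eps), u. split; [lra|]. split.
  - intros t Ht. apply Agree. lra.
  - intros t Ht. apply (solution_of_lienard delta lo hi delta_adm ltac:(lra) u v).
    apply (filter_imp (fun s => a0 < s < omega + eps)); [|apply locally_interval; lra].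
    intros s Hs. destruct (Hder s ltac:(lra)) as [D1 D2].
    split; [exact D1|]. split; [exact D2|].
    specialize (Hud s ltac:(unfold Rabs; destruct Rcase_abs; lra)).
    revert Hud; unfold Rabs; destruct Rcase_abs; intros; lra.
Qed.

Hypothesis r_max_right : maximal_right delta alpha omega r.

Lemma not_bounded_below_at_end (c T0 : R) : 0 < c -> Rbar_lt alpha T0 -> T0 < omega ->
  ~ (forall t, T0 < t < omega -> c <= r t).
Proof.
  intros Hc HT0 HT0w Hlow.
  set (T1 := (T0 + omega) / 2).
  assert (HT1 : Rbar_lt alpha T1) by (apply (Rbar_lt_R_le _ T0); [exact HT0|unfold T1; lra]).
  assert (Hlow' : forall t, T1 <= t < omega -> c <= r t) by (intros t Ht; apply Hlow; unfold T1 in *; lra).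
  destruct (solution_bounded_above c T1 HT1 ltac:(unfold T1; lra) Hc Hlow') as [R2 HR2].
  destruct (solution_continues (c / 2) (R2 + 1) c R2 T1 ltac:(lra) ltac:(lra) HT1 ltac:(unfold T1; lra))
    as [a0 [b [u [Hab [Hur Hu]]]]].
  { intros t Ht. split; [apply Hlow'|apply HR2]; exact Ht. }
  apply (r_max_right (Finite b) ltac:(simpl; lra)).
  exists (fun t => if Rlt_dec t omega then r t else u t). split.
  - apply solution_glue with a0; auto; lra.
  - intros t Hat Ht. destruct t as [t| |]; [|contradiction|destruct alpha; contradiction].
    simpl in Ht |- *. destruct (Rlt_dec t omega); [reflexivity|lra].
Qed.

Variable hw : R.
Hypothesis energy_lim : filterlim (energy r) (at_left omega) (locally hw).

Lemma energy_ge_limit (t : R) : Rbar_lt alpha t -> t < omega -> hw <= energy r t.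
Proof.
  intros H1 H2. apply Rnot_lt_le. intros Hlt.
  destruct (proj1 (filterlim_at_left_eps _ _ _) energy_lim (hw - energy r t)) as [d [Hd H]];
    [lra|].
  set (s := Rmax ((t + omega) / 2) (omega - d / 2)).
  assert (Hs1 : (t + omega) / 2 <= s) by apply Rmax_l.
  assert (Hs2 : omega - d / 2 <= s) by apply Rmax_r.
  assert (Hs3 : s < omega) by (unfold s, Rmax; destruct Rle_dec; lra).
  specialize (H s ltac:(lra)).
  pose proof (energy_nonincreasing t s H1 ltac:(lra) Hs3).
  revert H; unfold Rabs; destruct Rcase_abs; intros; lra.
Qed.

(* The threshold makes [2 / r >= 2 - 2 hw], and [r'^2 = 2 h + 2 / r] with [h >= hw]. *)
Lemma Derive_sq_ge_2 (t : R) : Rbar_lt alpha t -> t < omega -> r t <= / (Rabs hw + 1) ->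
  2 <= Derive r t ^ 2.
Proof.
  intros H1 H2 H3. destruct (r_solves_at t H1 H2) as [P _].
  rewrite (Derive_sq_energy r t P). pose proof (energy_ge_limit t H1 H2).
  assert (Rabs hw + 1 <= / r t).
  { rewrite <- (Rinv_inv (Rabs hw + 1)). apply Rinv_le_contravar; auto. }
  pose proof (Rle_abs (- hw)). rewrite Rabs_Ropp in *. unfold Rdiv. lra.
Qed.

Hypothesis alpha_lt_omega : Rbar_lt alpha omega.

Lemma bounded_below_of_frequently_large (eta : R) : 0 < eta ->
  (forall T : R, Rbar_lt alpha T -> T < omega -> exists t, T < t < omega /\ eta <= r t) ->
  exists c T0 : R, 0 < c /\ Rbar_lt alpha T0 /\ T0 < omega /\ forall t, T0 < t < omega -> c <= r t.
Proof.
  intros Heta Hfreq.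
  destruct (Rbar_lt_exists_between alpha omega alpha_lt_omega) as [T [HT HTw]].
  destruct (Hfreq T HT HTw) as [T0 [HT0 HrT0]].
  assert (HT0a : Rbar_lt alpha T0) by (apply (Rbar_lt_R_le _ T); [exact HT|lra]).
  set (c := Rmin eta (/ (Rabs hw + 1))).
  assert (Hc : 0 < c /\ c <= eta /\ c <= / (Rabs hw + 1)).
  { assert (0 < / (Rabs hw + 1)) by (apply Rinv_0_lt_compat; pose proof (Rabs_pos hw); lra).
    unfold c. split; [apply Rmin_pos|split; [apply Rmin_l|apply Rmin_r]]; lra. }
  exists c, T0. split; [lra|]. split; [exact HT0a|]. split; [lra|].
  intros t Ht. apply Rnot_lt_le. intros Hlt.
  assert (Hdom : forall s, T0 <= s -> Rbar_lt alpha s)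
    by (intros s Hs; exact (Rbar_lt_R_le _ _ _ HT0a Hs)).
  destruct (Hfreq t (Hdom t ltac:(lra)) ltac:(lra)) as [t2 [Ht2 Hrt2]].
  destruct (interior_min_critical r T0 t2 t) as [xi [Hxi [Hrxi Hcrit]]]; try lra.
  { intros x Hx. apply (r_solves_at x (Hdom x ltac:(lra)) ltac:(lra)). }
  pose proof (Derive_sq_ge_2 xi (Hdom xi ltac:(lra)) ltac:(lra) ltac:(lra)) as H2.
  rewrite Hcrit in H2. simpl in H2. lra.
Qed.

Lemma solution_tends_to_zero : filterlim r (at_left omega) (locally 0).
Proof.
  apply filterlim_at_left_eps. intros eps Heps. apply NNPP. intros Hno.
  destruct (bounded_below_of_frequently_large eps Heps)
    as [c [T0 [Hc [HT0 [HT0w Hlow]]]]].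
  - intros T HT HTw. apply NNPP. intros Hnot. apply Hno.
    exists (omega - T). split; [lra|]. intros t Ht.
    destruct (r_solves_at t (Rbar_lt_R_le alpha T t HT ltac:(lra)) ltac:(lra)) as [P _].
    rewrite Rminus_0_r, Rabs_right by lra. apply Rnot_le_lt. intros Hle.
    apply Hnot. exists t. split; [lra|exact Hle].
  - exact (not_bounded_below_at_end c T0 Hc HT0 HT0w Hlow).
Qed.

Lemma Derive_neg_near_end :
  exists T : R, Rbar_lt alpha T /\ T < omega /\ forall t, T < t < omega -> Derive r t < 0.
Proof.
  assert (Hc0 : 0 < / (Rabs hw + 1)) by (apply Rinv_0_lt_compat; pose proof (Rabs_pos hw); lra).
  destruct (proj1 (filterlim_at_left_eps _ _ _) solution_tends_to_zero _ Hc0) as [d [Hd Hsmall]].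
  destruct (Rbar_lt_exists_between alpha omega alpha_lt_omega) as [T' [HT' HT'w]].
  set (T := Rmax T' (omega - d)).
  assert (HT : T' <= T /\ omega - d <= T /\ T < omega) by (unfold T, Rmax; destruct Rle_dec; lra).
  assert (Hdom : forall s, T <= s -> Rbar_lt alpha s)
    by (intros s Hs; apply (Rbar_lt_R_le _ T'); [exact HT'|lra]).
  assert (Hr : forall t, T < t < omega -> 0 < r t < / (Rabs hw + 1)).
  { intros t Ht. destruct (r_solves_at t (Hdom t ltac:(lra)) ltac:(lra)) as [P _].
    specialize (Hsmall t ltac:(lra)). rewrite Rminus_0_r, Rabs_right in Hsmall; lra. }
  assert (Hsq : forall t, T < t < omega -> 2 <= Derive r t ^ 2)
    by (intros t Ht; apply Derive_sq_ge_2; [apply Hdom|..]; pose proof (Hr t Ht); lra).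
  exists T. split; [apply Hdom; lra|]. split; [lra|].
  intros t Ht. apply Rnot_le_lt. intros Hge.
  assert (Hpos : 0 < Derive r t)
    by (destruct Hge as [|E]; [lra|]; pose proof (Hsq t Ht) as H2; rewrite <- E in H2; simpl in H2; lra).
  destruct (r_solves_at t (Hdom t ltac:(lra)) ltac:(lra)) as [P [E1 _]].
  destruct (is_derive_pos_right r t _ (Derive_correct _ _ E1) Hpos) as [e [He Hinc]].
  set (t' := Rmin (t + e / 2) ((t + omega) / 2)).
  assert (Ht' : t < t' < omega /\ t' < t + e) by (unfold t', Rmin; destruct Rle_dec; lra).
  pose proof (Hinc t' ltac:(lra)) as Hrt'.
  destruct (proj1 (filterlim_at_left_eps _ _ _) solution_tends_to_zero (r t) P) as [d' [Hd' Hd's]].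
  set (s := Rmax ((t' + omega) / 2) (omega - d' / 2)).
  assert (Hs : t' < s < omega /\ omega - d' / 2 <= s) by (unfold s, Rmax; destruct Rle_dec; lra).
  specialize (Hd's s ltac:(lra)). rewrite Rminus_0_r in Hd's.
  destruct (interior_max_critical r t s t') as [xi [Hxi [_ Hcrit]]]; try lra.
  - intros x Hx. apply (r_solves_at x (Hdom x ltac:(lra)) ltac:(lra)).
  - pose proof (Rle_abs (r s)). lra.
  - pose proof (Hsq xi ltac:(lra)) as H2. rewrite Hcrit in H2. simpl in H2. lra.
Qed.

Lemma deriv_r_3_2_limit :
  filterlim (fun t => 3 / 2 * sqrt (r t) * Derive r t) (at_left omega)
    (locally (- (3 / 2) * sqrt 2)).
Proof.
  destruct Derive_neg_near_end as [T [HT [HTw Hneg]]].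
  assert (L : filterlim (fun t => 2 * energy r t * r t + 2) (at_left omega) (locally (2 * hw * 0 + 2))).
  { eapply (filterlim_comp_2 (fun t => 2 * energy r t * r t) (fun _ => 2) Rplus);
      [|apply filterlim_const|apply (filterlim_plus (V := R_NormedModule))].
    eapply (filterlim_comp_2 (fun t => 2 * energy r t) r Rmult);
      [|exact solution_tends_to_zero|apply (filterlim_mult (K := R_AbsRing))].
    eapply (filterlim_comp_2 (fun _ => 2) (energy r) Rmult);
      [apply filterlim_const|exact energy_lim|apply (filterlim_mult (K := R_AbsRing))]. }
  replace (2 * hw * 0 + 2) with 2 in L by ring.
  apply (filterlim_ext_loc (fun t => - (3 / 2) * sqrt (2 * energy r t * r t + 2))).
  - apply (at_left_interval T); [exact HTw|]. intros t Ht.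
    destruct (r_solves_at t (Rbar_lt_R_le alpha T t HT ltac:(lra)) ltac:(lra)) as [P _].
    replace (2 * energy r t * r t + 2) with (r t * Derive r t ^ 2)
      by (rewrite Derive_sq_energy by exact P; field; lra).
    rewrite sqrt_mult by (lra || apply pow2_ge_0).
    rewrite <- Rsqr_pow2, sqrt_Rsqr_abs, Rabs_left by (apply Hneg; exact Ht).
    ring.
  - apply (filterlim_comp _ _ _ _ (fun x => - (3 / 2) * x) _ _ _
      (filterlim_comp _ _ _ _ sqrt _ _ _ L (continuous_sqrt 2))).
    apply (continuous_mult (K := R_AbsRing) (fun _ => - (3 / 2)) (fun x => x));
      [apply continuous_const|apply continuous_id].
Qed.

Theorem collision_asymptotics :
  filterlim (fun t => r t / Rpower (omega - t) (2 / 3)) (at_left omega)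
    (locally (Rpower (9 / 2) (1 / 3))).
Proof.
  destruct (Rbar_lt_exists_between alpha omega alpha_lt_omega) as [T [HT HTw]].
  assert (Hdom : forall t, T < t < omega -> solves_at delta r t)
    by (intros t Ht; apply r_solves_at; [exact (Rbar_lt_R_le alpha T t HT ltac:(lra))|lra]).
  set (phi := fun t => r t * sqrt (r t)).
  assert (Phi0 : filterlim phi (at_left omega) (locally (0 * sqrt 0))).
  { eapply (filterlim_comp_2 r (fun t => sqrt (r t)) Rmult);
      [exact solution_tends_to_zero| |apply (filterlim_mult (K := R_AbsRing))].
    exact (filterlim_comp _ _ _ _ sqrt _ _ _ solution_tends_to_zero (continuous_sqrt 0)). }
  rewrite Rmult_0_l in Phi0.
  assert (Ratio : filterlim (fun t => phi t / (omega - t)) (at_left omega) (locally (3 / 2 * sqrt 2))).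
  { apply (ratio_limit_of_derivative phi (fun t => 3 / 2 * sqrt (r t) * Derive r t) omega T _ HTw).
    - intros t Ht. destruct (Hdom t Ht) as [P [E _]]. exact (is_derive_mul_sqrt r t P E).
    - exact Phi0.
    - replace (- (3 / 2 * sqrt 2)) with (- (3 / 2) * sqrt 2) by ring. exact deriv_r_3_2_limit. }
  rewrite <- Rpower_collision_constant.
  apply (filterlim_ext_loc (fun t => Rpower (phi t / (omega - t)) (2 / 3))).
  - apply (at_left_interval T); [exact HTw|]. intros t Ht.
    destruct (Hdom t Ht) as [P _]. apply Rpower_mul_sqrt_div; lra.
  - apply (filterlim_comp _ _ _ _ (fun x => Rpower x (2 / 3)) _ _ _ Ratio).
    apply (proj1 (continuity_pt_filterlim (fun x => Rpower x (2 / 3)) _)), derivable_continuous_pt.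
    eexists.
    apply derivable_pt_lim_power. pose proof (sqrt_lt_R0 2 ltac:(lra)). lra.
Qed.

End Solution.

Theorem corollary8p2 (delta : R -> R) (alpha : Rbar) (omega : R) (r : R -> R) :
  admissible_delta delta ->
  Rbar_lt alpha omega ->
  is_solution delta alpha omega r ->
  maximal_left delta alpha omega r ->
  maximal_right delta alpha omega r ->
  (exists hw : R, filterlim (energy r) (at_left omega) (locally hw)) ->
  filterlim (fun t => r t / Rpower (omega - t) (2 / 3))
    (at_left omega) (locally (Rpower (9 / 2) (1 / 3))).
Proof.
  intros Hadm Hlt Hsol _ Hmax [hw Hlim].
  exact (collision_asymptotics delta alpha omega r Hadm Hsol Hmax hw Hlim Hlt).
Qed.
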